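(* Let $g(x)=1-(1-x^2)^4$ for $|x|\le1$ and $g(x)=1$ otherwise, and let $D=([0,+\infty[\times\{2\})\cup(\{0\}\times]0,2])$. Then there exists a unique map $\Delta:]0,+\infty[\times]0,+\infty[\to D$ such that for every $(t,x)$, writing $\Delta(t,x)=(q_o,p_o)$, one has $\mathcal{F}_q(t,q_o,p_o)=x$ and $\mathcal{F}_q(s,q_o,p_o)>0$ for all $s\in]0,t[$. Moreover: (1) $\Delta$ is continuous; (2) if $\Delta(t_o,x_o)=(0,p_o)$, $\Delta(t_o,x_o')=(0,p_o')$ and $0<x_o<x_o'<q^\sharp(t_o)$, then $p_o<p_o'$; (3) for all $x\in]0,+\infty[$, $\lim_{t\to0+}\Delta(t,x)=(x,2)$.
   Context: $\mathcal{F}(t,q_o,p_o)=(\mathcal{F}_q,\mathcal{F}_p)(t,q_o,p_o)=(q(t),p(t))$, where $(q,p)$ is the global solution of $\dot q=p$, $\dot p=-g'(q)$ with $(q(0),p(0))=(q_o,p_o)$. $q^\sharp(t)=\mathcal{F}_q(t,0,2)$. *)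

From Stdlib Require Import Reals.
From Coquelicot Require Import Coquelicot.
Open Scope R_scope.

Definition g (x : R) : R :=
  if Rle_dec (Rabs x) 1 then 1 - (1 - x ^ 2) ^ 4 else 1.

Definition is_flow (Fq Fp : R -> R -> R -> R) : Prop :=
  forall q0 p0 : R,
    Fq 0 q0 p0 = q0 /\ Fp 0 q0 p0 = p0 /\
    forall t : R,
      is_derive (fun s => Fq s q0 p0) t (Fp t q0 p0) /\
      is_derive (fun s => Fp s q0 p0) t (- Derive g (Fq t q0 p0)).

Definition inD (z : R * R) : Prop :=
  (0 <= fst z /\ snd z = 2) \/ (fst z = 0 /\ 0 < snd z <= 2).

Definition Delta_prop (Fq : R -> R -> R -> R) (Delta : R -> R -> R * R)
  (t x : R) : Prop :=
  inD (Delta t x) /\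
  Fq t (fst (Delta t x)) (snd (Delta t x)) = x /\
  (forall s, 0 < s < t -> Fq s (fst (Delta t x)) (snd (Delta t x)) > 0).

Definition qsharp (Fq : R -> R -> R -> R) (t : R) : R := Fq t 0 2.

(* Parametrise D by c > 0 through [Dparam c = (max 0 (c - 2), min c 2)] and let q_c be the
   position along the trajectory started at [Dparam c].  The heart of the proof is that shots
   are ordered: if c1 < c2 and q_c1 stays positive on ]0,T[, then q_c1 < q_c2 there.  At a
   first contact the momenta must agree (by a Wronskian argument when both shots start at
   q = 0, since g'(q)/q is nonincreasing on [0,+oo[; by comparing energies otherwise), and then
   uniqueness for the Lipschitz ODE identifies the initial data.  Hence c |-> q_c(t) is
   strictly increasing on the up-closed set of shots staying positive up to time t; the
   threshold shot of that set ends at q = 0, and the intermediate value theorem gives the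
   unique c with q_c(t) = x.  Continuity follows from continuous dependence on the data, and
   for small t the bounds c - 2 <= q_c(t) <= c - 2 + 3t (for c >= 2) force c -> x + 2. *)

From Stdlib Require Import Reals Lra Psatz Classical ClassicalEpsilon.
From Coquelicot Require Import Coquelicot.
Open Scope R_scope.

Lemma is_derive_continuity_pt (f : R -> R) (x l : R) :
  is_derive f x l -> continuity_pt f x.
Proof.
  intros H. apply continuity_pt_filterlim, (ex_derive_continuous f x). now exists l.
Qed.

Lemma MVT_closed (f df : R -> R) (a b : R) :
  a <= b -> (forall x, is_derive f x (df x)) ->
  exists c, a <= c <= b /\ f b - f a = df c * (b - a).
Proof.
  intros Hab Hd.
  destruct (MVT_gen f a b df) as [c [Hc E]].
  - intros x _; apply Hd.
  - intros x _; apply (is_derive_continuity_pt f x (df x)), Hd.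
  - exists c. rewrite Rmin_left, Rmax_right in Hc by lra. auto.
Qed.

Lemma is_derive_0_const (f : R -> R) :
  (forall t, is_derive f t 0) -> forall t, f t = f 0.
Proof.
  intros H t. destruct (Rle_dec 0 t).
  - destruct (MVT_closed f (fun _ => 0) 0 t r H) as [c [_ E]]. lra.
  - destruct (MVT_closed f (fun _ => 0) t 0 ltac:(lra) H) as [c [_ E]]. lra.
Qed.

Lemma continuity_pt_eps (f : R -> R) (x eps : R) : continuity_pt f x -> 0 < eps ->
  exists d, 0 < d /\ forall y, Rabs (y - x) < d -> Rabs (f y - f x) < eps.
Proof.
  intros H He. destruct (proj1 (continuity_pt_locally f x) H (mkposreal eps He)) as [d Hd].
  exists d. split; [apply cond_pos|]. intros y Hy. exact (Hd y Hy).
Qed.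

Lemma is_derive_pos_locally (f : R -> R) (x l : R) : is_derive f x l -> 0 < l ->
  exists d, 0 < d /\ (forall y, x < y < x + d -> f x < f y) /\
                      (forall y, x - d < y < x -> f y < f x).
Proof.
  intros H Hl. apply is_derive_Reals in H. destruct (H (l / 2)) as [d Hd]; [lra|].
  exists d. split; [apply cond_pos|].
  assert (Hq : forall y, y <> x -> Rabs (y - x) < d -> (f y - f x) / (y - x) > 0).
  { intros y Hy Hyd. specialize (Hd (y - x) ltac:(lra) Hyd).
    replace (x + (y - x)) with y in Hd by ring. apply Rabs_lt_between in Hd. lra. }
  assert (Hm : forall y, y <> x -> f y - f x = (f y - f x) / (y - x) * (y - x))
    by (intros y Hy; field; lra).
  split; intros y Hy; specialize (Hq y ltac:(lra)); specialize (Hm y ltac:(lra)).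
  - assert (Rabs (y - x) < d) by (rewrite Rabs_right; lra). specialize (Hq H0). nra.
  - assert (Rabs (y - x) < d) by (rewrite Rabs_left; lra). specialize (Hq H0). nra.
Qed.

Lemma is_derive_local_min (f : R -> R) (x l d : R) : is_derive f x l -> 0 < d ->
  (forall y, Rabs (y - x) < d -> f x <= f y) -> l = 0.
Proof.
  intros H Hd Hmin.
  destruct (Rtotal_order l 0) as [Hn|[Hz|Hp]]; auto; exfalso.
  - destruct (is_derive_pos_locally (fun y => - f y) x (- l)) as [e [He [Hgt _]]];
      [exact (is_derive_opp f x l H) | lra |].
    set (y := x + Rmin d e / 2).
    assert (Rmin d e <= d /\ Rmin d e <= e /\ 0 < Rmin d e)
      by (split; [apply Rmin_l|split; [apply Rmin_r|apply Rmin_pos; lra]]).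
    specialize (Hgt y ltac:(unfold y; lra)).
    specialize (Hmin y ltac:(unfold y; rewrite Rabs_right; lra)). lra.
  - destruct (is_derive_pos_locally f x l H Hp) as [e [He [_ Hlt]]].
    set (y := x - Rmin d e / 2).
    assert (Rmin d e <= d /\ Rmin d e <= e /\ 0 < Rmin d e)
      by (split; [apply Rmin_l|split; [apply Rmin_r|apply Rmin_pos; lra]]).
    specialize (Hlt y ltac:(unfold y; lra)).
    specialize (Hmin y ltac:(unfold y; rewrite Rabs_left; lra)). lra.
Qed.

Lemma first_zero (f : R -> R) (e s1 : R) : (forall x, continuity_pt f x) -> 0 < e ->
  (forall s, 0 < s < e -> 0 < f s) -> 0 < s1 -> f s1 <= 0 ->
  exists s0, 0 < s0 <= s1 /\ f s0 = 0 /\ forall s, 0 < s < s0 -> 0 < f s.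
Proof.
  intros Hc He Hpos Hs1 Hf1.
  set (E := fun s => 0 <= s <= s1 /\ forall r, 0 < r < s -> 0 < f r).
  destruct (completeness E) as [m [Hub Hlub]].
  - exists s1. intros s [Hs _]. lra.
  - exists 0. split; [lra|]. intros r Hr; lra.
  - assert (Hmin : E (Rmin e s1)).
    { pose proof (Rmin_l e s1). pose proof (Rmin_r e s1).
      split; [split; [apply Rmin_glb|]; lra|]. intros r Hr. apply Hpos. lra. }
    pose proof (Hub _ Hmin) as Hm1.
    assert (Hm0 : 0 < m) by (apply Rlt_le_trans with (2 := Hm1); apply Rmin_pos; lra).
    assert (Hm2 : m <= s1) by (apply Hlub; intros s [Hs _]; lra).
    assert (Hbelow : forall r, 0 < r < m -> 0 < f r).
    { intros r Hr. destruct (Rlt_or_le 0 (f r)) as [|Hfr]; auto. exfalso.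
      assert (m <= r); [|lra].
      apply Hlub. intros s [_ Hs]. destruct (Rle_dec s r); auto. specialize (Hs r). lra. }
    exists m. split; [lra|]. split; auto.
    destruct (Rtotal_order (f m) 0) as [Hlt|[Heq|Hgt]]; auto; exfalso.
    + destruct (continuity_pt_eps f m (- f m) (Hc m)) as [d [Hd Hnear]]; [lra|].
      set (y := Rmax (m - d / 2) (m / 2)).
      assert (Hy : 0 < y < m /\ Rabs (y - m) < d)
        by (unfold y, Rmax; destruct Rle_dec; rewrite Rabs_left by lra; lra).
      specialize (Hnear y (proj2 Hy)). specialize (Hbelow y (proj1 Hy)).
      apply Rabs_lt_between in Hnear. lra.
    + destruct (continuity_pt_eps f m (f m) (Hc m)) as [d [Hd Hnear]]; [lra|].
      destruct (Req_dec m s1) as [Hms|Hms]; [subst m; lra|].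
      set (y := Rmin (m + d / 2) s1).
      assert (Hy : m < y <= s1 /\ y <= m + d / 2)
        by (unfold y, Rmin; destruct Rle_dec; lra).
      assert (Ey : E y).
      { split; [lra|]. intros r Hr. destruct (Rlt_or_le r m); [apply Hbelow; lra|].
        specialize (Hnear r ltac:(rewrite Rabs_right; lra)).
        apply Rabs_lt_between in Hnear. lra. }
      specialize (Hub y Ey). lra.
Qed.

Lemma is_derive_0_of_quadratic_bound (f : R -> R) (x K d : R) : 0 < d -> 0 <= K ->
  (forall y, Rabs (y - x) < d -> Rabs (f y - f x) <= K * (y - x) ^ 2) ->
  is_derive f x 0.
Proof.
  intros Hd HK H. apply is_derive_Reals. intros eps Heps.
  assert (Hm : 0 < Rmin d (eps / (K + 1))) by (apply Rmin_pos; [|apply Rdiv_lt_0_compat]; lra).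
  exists (mkposreal _ Hm). intros h Hh0 Hh. simpl in Hh.
  pose proof (Rmin_l d (eps / (K + 1))). pose proof (Rmin_r d (eps / (K + 1))).
  specialize (H (x + h) ltac:(replace (x + h - x) with h by ring; lra)).
  replace (x + h - x) with h in H by ring.
  assert (Hp : 0 < Rabs h) by (apply Rabs_pos_lt; auto).
  assert (HKe : Rabs h * (K + 1) < eps).
  { apply Rmult_lt_reg_r with (/ (K + 1)); [apply Rinv_0_lt_compat; lra|].
    rewrite Rmult_assoc, Rinv_r by lra. lra. }
  rewrite Rminus_0_r, Rabs_div by auto.
  apply Rmult_lt_reg_r with (Rabs h); auto.
  unfold Rdiv. rewrite Rmult_assoc, Rinv_l by lra.
  replace (h ^ 2) with (Rabs h * Rabs h) in H by (rewrite <- Rabs_mult, Rabs_pos_eq by nra; ring).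
  nra.
Qed.

(** * The potential g *)

Definition dg_quot (x : R) : R := if Rle_dec (Rabs x) 1 then 8 * (1 - x ^ 2) ^ 3 else 0.
Definition dg (x : R) : R := x * dg_quot x.
Definition dg_poly (x : R) : R := 8 * x * (1 - x ^ 2) ^ 3.

Lemma g_bounds (x : R) : 0 <= g x <= 1.
Proof.
  unfold g. destruct Rle_dec as [H|H]; [|lra].
  apply Rabs_le_between in H. assert (0 <= 1 - x ^ 2 <= 1) by nra.
  assert (0 <= (1 - x ^ 2) ^ 4 <= 1)
    by (split; [apply pow_le|rewrite <- (pow1 4); apply pow_incr]; lra).
  lra.
Qed.

Lemma g_0 : g 0 = 0.
Proof. unfold g. rewrite Rabs_R0. destruct Rle_dec; [ring|lra]. Qed.

Lemma g_le_nonneg (a b : R) : 0 <= a <= b -> g a <= g b.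
Proof.
  intros Hab. unfold g.
  destruct (Rle_dec (Rabs b) 1) as [Hb|Hb]; destruct (Rle_dec (Rabs a) 1) as [Ha|Ha];
    rewrite ?Rabs_right in Ha, Hb by lra; try lra.
  - assert ((1 - b ^ 2) ^ 4 <= (1 - a ^ 2) ^ 4) by (apply pow_incr; nra). lra.
  - assert (0 <= (1 - a ^ 2) ^ 4) by (apply pow_le; nra). lra.
Qed.

Lemma dg_quot_le_nonneg (a b : R) : 0 <= a <= b -> dg_quot b <= dg_quot a.
Proof.
  intros Hab. unfold dg_quot.
  destruct (Rle_dec (Rabs b) 1) as [Hb|Hb]; destruct (Rle_dec (Rabs a) 1) as [Ha|Ha];
    rewrite ?Rabs_right in Ha, Hb by lra; try lra.
  - assert ((1 - b ^ 2) ^ 3 <= (1 - a ^ 2) ^ 3) by (apply pow_incr; nra). lra.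
  - assert (0 <= (1 - a ^ 2) ^ 3) by (apply pow_le; nra). lra.
Qed.

Lemma dg_0 : dg 0 = 0.
Proof. unfold dg. ring. Qed.

Definition clamp1 (x : R) : R := Rmax (-1) (Rmin x 1).

Lemma clamp1_bounds (x : R) : -1 <= clamp1 x <= 1.
Proof. unfold clamp1, Rmax, Rmin. repeat destruct Rle_dec; lra. Qed.

(* [dg_poly] vanishes at [-1] and [1]. *)
Lemma dg_clamp (x : R) : dg x = dg_poly (clamp1 x).
Proof.
  unfold dg, dg_quot, dg_poly, clamp1. destruct (Rle_dec (Rabs x) 1) as [H|H].
  - apply Rabs_le_between in H. rewrite Rmin_left, Rmax_right by lra. ring.
  - assert (Hx : 1 < x \/ x < -1) by (unfold Rabs in H; destruct Rcase_abs; lra).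
    destruct Hx.
    + rewrite Rmin_right, Rmax_right by lra. ring.
    + rewrite Rmin_left, Rmax_left by lra. ring.
Qed.

Lemma dg_poly_lipschitz (a b : R) : -1 <= a <= 1 -> -1 <= b <= 1 ->
  Rabs (dg_poly b - dg_poly a) <= 48 * Rabs (b - a).
Proof.
  assert (Hd : forall x, is_derive dg_poly x (8 * (1 - x ^ 2) ^ 2 * (1 - 7 * x ^ 2)))
    by (intros x; unfold dg_poly; auto_derive; [auto|ring]).
  assert (Hle : forall u v, -1 <= u <= 1 -> -1 <= v <= 1 -> u <= v ->
            Rabs (dg_poly v - dg_poly u) <= 48 * Rabs (v - u)).
  { intros u v Hu Hv Huv.
    destruct (MVT_closed dg_poly _ u v Huv Hd) as [c [Hc ->]].
    rewrite Rabs_mult. apply Rmult_le_compat_r; [apply Rabs_pos|].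
    assert (0 <= 1 - c ^ 2 <= 1) by nra.
    assert (0 <= (1 - c ^ 2) ^ 2 <= 1) by (split; [apply pow_le|]; nra).
    apply Rabs_le_between. nra. }
  intros Ha Hb. destruct (Rle_dec a b); [now apply Hle|].
  rewrite Rabs_minus_sym, (Rabs_minus_sym b a). apply Hle; lra.
Qed.

Lemma dg_lipschitz (a b : R) : Rabs (dg b - dg a) <= 48 * Rabs (b - a).
Proof.
  assert (Hcl : Rabs (clamp1 b - clamp1 a) <= Rabs (b - a))
    by (unfold clamp1, Rmax, Rmin, Rabs; repeat destruct Rle_dec; repeat destruct Rcase_abs; lra).
  rewrite !dg_clamp.
  eapply Rle_trans; [apply dg_poly_lipschitz; apply clamp1_bounds|]. lra.
Qed.

Lemma dg_abs_le (x : R) : Rabs (dg x) <= 8.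
Proof.
  rewrite dg_clamp. pose proof (clamp1_bounds x) as Hy. set (y := clamp1 x) in *.
  assert (0 <= 1 - y ^ 2 <= 1) by nra.
  assert (0 <= (1 - y ^ 2) ^ 3 <= 1)
    by (split; [apply pow_le|rewrite <- (pow1 3); apply pow_incr]; lra).
  unfold dg_poly. apply Rabs_le_between. nra.
Qed.

(* At [x = 1] or [x = -1], [g] is flat to fourth order. *)
Lemma is_derive_g_unit (x : R) : Rabs x = 1 -> is_derive g x (dg x).
Proof.
  intros Hx1.
  assert (Hx : x * x = 1) by (rewrite <- (Rabs_pos_eq (x * x)) by nra; rewrite Rabs_mult; nra).
  replace (dg x) with 0
    by (unfold dg, dg_quot; destruct Rle_dec; [replace (x ^ 2) with 1 by (simpl; lra)|]; ring).
  apply is_derive_0_of_quadratic_bound with 81 1; [lra|lra|].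
  intros y Hy.
  assert (Hgx : g x = 1)
    by (unfold g; destruct Rle_dec; [replace (x ^ 2) with 1 by (simpl; lra)|]; ring).
  assert (Hgy : Rabs (g y - 1) <= Rabs (1 - y ^ 2) ^ 4).
  { unfold g. destruct Rle_dec.
    - replace (1 - (1 - y ^ 2) ^ 4 - 1) with (- (1 - y ^ 2) ^ 4) by ring.
      rewrite Rabs_Ropp, RPow_abs. lra.
    - rewrite Rminus_diag, Rabs_R0. apply pow_le, Rabs_pos. }
  assert (H1y : Rabs (1 - y ^ 2) <= 3 * Rabs (y - x)).
  { replace (1 - y ^ 2) with ((x - y) * (x + y)) by (simpl; nra).
    rewrite Rabs_mult, Rabs_minus_sym, Rmult_comm.
    apply Rmult_le_compat_r; [apply Rabs_pos|].
    apply Rabs_le_between. apply Rabs_lt_between in Hy. nra. }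
  rewrite Hgx. eapply Rle_trans; [exact Hgy|].
  set (u := Rabs (y - x)) in *.
  assert (0 <= u < 1) by (split; [apply Rabs_pos|lra]).
  replace ((y - x) ^ 2) with (u ^ 2) by (unfold u; apply pow2_abs).
  apply Rle_trans with ((3 * u) ^ 4); [apply pow_incr; split; [apply Rabs_pos|lra]|].
  assert (0 <= u ^ 2 <= 1) by nra. simpl. nra.
Qed.

Lemma is_derive_g (x : R) : is_derive g x (dg x).
Proof.
  destruct (Rlt_or_le 1 (Rabs x)) as [Hout|Hin].
  - unfold dg, dg_quot. destruct Rle_dec; [lra|]. rewrite Rmult_0_r.
    apply is_derive_ext_loc with (fun _ => 1); [|exact (is_derive_const 1 x)].
    exists (mkposreal (Rabs x - 1) ltac:(lra)). intros y Hy. unfold g.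
    destruct Rle_dec as [h|]; auto. exfalso.
    change (Rabs (y - x) < Rabs x - 1) in Hy. pose proof (Rabs_triang_inv x y).
    rewrite Rabs_minus_sym in Hy. lra.
  - destruct (Rlt_or_le (Rabs x) 1) as [Hlt|Hge].
    + apply is_derive_ext_loc with (fun y => 1 - (1 - y ^ 2) ^ 4).
      * exists (mkposreal (1 - Rabs x) ltac:(lra)). intros y Hy. unfold g.
        destruct Rle_dec as [|n]; auto. exfalso; apply n.
        change (Rabs (y - x) < 1 - Rabs x) in Hy. pose proof (Rabs_triang_inv y x). lra.
      * unfold dg, dg_quot. destruct Rle_dec; [|lra]. auto_derive; [auto|ring].
    + apply is_derive_g_unit. lra.
Qed.

Lemma Derive_g (x : R) : Derive g x = dg x.
Proof. apply is_derive_unique, is_derive_g. Qed.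

(** * Newton's equation with a Lipschitz force *)

(* [|2ab| <= a^2 + b^2] and [|2bc| <= 2 L |a| |b| <= L (a^2 + b^2)]. *)
Lemma gronwall_rate_bound (a b c L : R) : 0 <= L -> Rabs c <= L * Rabs a ->
  Rabs (2 * a * b - 2 * b * c) <= (1 + L) * (a ^ 2 + b ^ 2).
Proof.
  intros HL Hc. rewrite <- (pow2_abs a), <- (pow2_abs b).
  assert (Hab : Rabs (2 * a * b - 2 * b * c) <= 2 * Rabs a * Rabs b + 2 * Rabs b * Rabs c).
  { unfold Rminus. eapply Rle_trans; [apply Rabs_triang|]. rewrite Rabs_Ropp, !Rabs_mult.
    rewrite (Rabs_pos_eq 2) by lra. lra. }
  pose proof (Rabs_pos a). pose proof (Rabs_pos b).
  assert (Hbc : 2 * Rabs b * Rabs c <= L * (2 * Rabs a * Rabs b)).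
  { replace (L * (2 * Rabs a * Rabs b)) with (2 * Rabs b * (L * Rabs a)) by ring.
    apply Rmult_le_compat_l; lra. }
  assert (Hsq : 2 * Rabs a * Rabs b <= Rabs a ^ 2 + Rabs b ^ 2)
    by (pose proof (pow2_ge_0 (Rabs a - Rabs b)); nra).
  assert (HLsq : L * (2 * Rabs a * Rabs b) <= L * (Rabs a ^ 2 + Rabs b ^ 2))
    by (apply Rmult_le_compat_l; lra).
  lra.
Qed.

Ltac ring_R := unfold minus, plus, opp, scal; simpl; unfold mult; simpl; ring.

Section Newton.

Variables (V dV : R -> R) (L : R).
Hypothesis V_deriv : forall x, is_derive V x (dV x).
Hypothesis dV_lipschitz : forall a b, Rabs (dV b - dV a) <= L * Rabs (b - a).

Definition newton_sol (q p : R -> R) : Prop :=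
  forall t, is_derive q t (p t) /\ is_derive p t (- dV (q t)).

Lemma newton_energy (q p : R -> R) : newton_sol q p -> forall t,
  p t ^ 2 + 2 * V (q t) = p 0 ^ 2 + 2 * V (q 0).
Proof.
  intros Hs. apply (is_derive_0_const (fun t => p t ^ 2 + 2 * V (q t))). intros t.
  destruct (Hs t) as [Hq Hp].
  eapply (eq_ind _ (is_derive _ t)).
  - apply (is_derive_plus (fun t => p t ^ 2) (fun t => 2 * V (q t))).
    + apply (is_derive_pow p 2 t _ Hp).
    + apply is_derive_scal. apply (is_derive_comp V q t _ _ (V_deriv _) Hq).
  - ring_R.
Qed.

Lemma newton_sol_reverse (q p : R -> R) (s : R) : newton_sol q p ->
  newton_sol (fun y => q (s - y)) (fun y => - p (s - y)).
Proof.
  intros H y. destruct (H (s - y)) as [Hq Hp].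
  assert (Hs : is_derive (fun y => s - y) y (-1)) by (auto_derive; [auto|ring]).
  split; eapply (eq_ind _ (is_derive _ y)).
  - apply (is_derive_comp q (fun y => s - y) y _ _ Hq Hs).
  - ring_R.
  - apply (is_derive_opp (fun y => p (s - y))), (is_derive_comp p (fun y => s - y) y _ _ Hp Hs).
  - ring_R.
Qed.

Definition sqdist (q1 p1 q2 p2 : R -> R) (t : R) : R :=
  (q1 t - q2 t) ^ 2 + (p1 t - p2 t) ^ 2.

Definition sqdist_rate (q1 p1 q2 p2 : R -> R) (t : R) : R :=
  2 * (q1 t - q2 t) * (p1 t - p2 t) - 2 * (p1 t - p2 t) * (dV (q1 t) - dV (q2 t)).

Lemma sqdist_deriv (q1 p1 q2 p2 : R -> R) : newton_sol q1 p1 -> newton_sol q2 p2 ->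
  forall t, is_derive (sqdist q1 p1 q2 p2) t (sqdist_rate q1 p1 q2 p2 t) /\
    Rabs (sqdist_rate q1 p1 q2 p2 t) <= (1 + L) * sqdist q1 p1 q2 p2 t.
Proof.
  intros H1 H2 t. destruct (H1 t) as [Hq1 Hp1]. destruct (H2 t) as [Hq2 Hp2].
  unfold sqdist_rate. split.
  - unfold sqdist. eapply (eq_ind _ (is_derive _ t)).
    + apply (is_derive_plus (fun t => (q1 t - q2 t) ^ 2) (fun t => (p1 t - p2 t) ^ 2)).
      * apply (is_derive_pow (fun t => q1 t - q2 t) 2 t _ (is_derive_minus q1 q2 t _ _ Hq1 Hq2)).
      * apply (is_derive_pow (fun t => p1 t - p2 t) 2 t _ (is_derive_minus p1 p2 t _ _ Hp1 Hp2)).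
    + ring_R.
  - apply gronwall_rate_bound; [|apply dV_lipschitz].
    pose proof (dV_lipschitz 0 1) as H. pose proof (Rabs_pos (dV 1 - dV 0)).
    rewrite Rminus_0_r, Rabs_R1 in H. lra.
Qed.

Lemma newton_gronwall (q1 p1 q2 p2 : R -> R) : newton_sol q1 p1 -> newton_sol q2 p2 ->
  forall t, 0 <= t ->
  sqdist q1 p1 q2 p2 t <= sqdist q1 p1 q2 p2 0 * exp ((1 + L) * t).
Proof.
  intros H1 H2 t Ht.
  set (D := sqdist q1 p1 q2 p2). set (r := sqdist_rate q1 p1 q2 p2).
  set (e := fun y => exp (- ((1 + L) * y))).
  assert (He : forall y, is_derive e y (- (1 + L) * e y))
    by (intros y; unfold e; auto_derive; [auto|ring]).
  assert (HW : forall y, is_derive (fun y => D y * e y) y (r y * e y + D y * (- (1 + L) * e y))).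
  { intros y. apply (is_derive_mult D e y _ _ (proj1 (sqdist_deriv _ _ _ _ H1 H2 y)) (He y)).
    intros; apply Rmult_comm. }
  destruct (MVT_closed _ _ 0 t Ht HW) as [c [_ Hc]].
  assert (Hdecr : r c * e c + D c * (- (1 + L) * e c) <= 0).
  { destruct (sqdist_deriv _ _ _ _ H1 H2 c) as [_ B]. fold r D in B.
    apply Rabs_le_between in B. assert (0 < e c) by apply exp_pos. nra. }
  assert (HDt : D t = D t * e t * exp ((1 + L) * t)).
  { unfold e. rewrite Rmult_assoc, <- exp_plus.
    replace (- ((1 + L) * t) + (1 + L) * t) with 0 by ring. rewrite exp_0. ring. }
  assert (He0 : e 0 = 1) by (unfold e; rewrite Rmult_0_r, Ropp_0; apply exp_0).
  rewrite He0, Rminus_0_r in Hc. pose proof (Rmult_le_compat_r t _ _ Ht Hdecr).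
  rewrite HDt. apply Rmult_le_compat_r; [apply Rlt_le, exp_pos|]. lra.
Qed.

Lemma newton_unique_fwd (q1 p1 q2 p2 : R -> R) : newton_sol q1 p1 -> newton_sol q2 p2 ->
  q1 0 = q2 0 -> p1 0 = p2 0 -> forall t, 0 <= t -> q1 t = q2 t /\ p1 t = p2 t.
Proof.
  intros H1 H2 E1 E2 t Ht. pose proof (newton_gronwall _ _ _ _ H1 H2 t Ht) as G.
  unfold sqdist in G. rewrite E1, E2, !Rminus_diag in G.
  replace (0 ^ 2 + 0 ^ 2) with 0 in G by ring. rewrite Rmult_0_l in G.
  pose proof (pow2_ge_0 (q1 t - q2 t)). pose proof (pow2_ge_0 (p1 t - p2 t)).
  split; apply Rminus_diag_uniq; nra.
Qed.

Lemma newton_unique_bwd (q1 p1 q2 p2 : R -> R) (s : R) :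
  newton_sol q1 p1 -> newton_sol q2 p2 -> 0 <= s ->
  q1 s = q2 s -> p1 s = p2 s -> q1 0 = q2 0 /\ p1 0 = p2 0.
Proof.
  intros H1 H2 Hs E1 E2.
  destruct (newton_unique_fwd _ _ _ _ (newton_sol_reverse q1 p1 s H1)
              (newton_sol_reverse q2 p2 s H2)) with s as [A B]; auto;
    rewrite ?Rminus_0_r, ?Rminus_diag in *; lra.
Qed.

End Newton.

(** * A parametrisation of D *)

Definition Dparam (c : R) : R * R := (Rmax 0 (c - 2), Rmin c 2).

Lemma Dparam_low (c : R) : c <= 2 -> Dparam c = (0, c).
Proof. intros H. unfold Dparam. rewrite Rmax_left, Rmin_left by lra. reflexivity. Qed.

Lemma Dparam_high (c : R) : 2 <= c -> Dparam c = (c - 2, 2).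
Proof. intros H. unfold Dparam. rewrite Rmax_right, Rmin_right by lra. reflexivity. Qed.

Lemma Dparam_inj (c1 c2 : R) : Dparam c1 = Dparam c2 -> c1 = c2.
Proof.
  unfold Dparam, Rmax, Rmin. intros E. injection E.
  repeat destruct Rle_dec; intros; lra.
Qed.

Lemma Dparam_on_axis (c p : R) : Dparam c = (0, p) -> p = c.
Proof.
  unfold Dparam, Rmax, Rmin. intros E. injection E.
  repeat destruct Rle_dec; intros; lra.
Qed.

Lemma Dparam_lipschitz (a b : R) :
  Rabs (fst (Dparam b) - fst (Dparam a)) <= Rabs (b - a) /\
  Rabs (snd (Dparam b) - snd (Dparam a)) <= Rabs (b - a).
Proof.
  unfold Dparam, Rmax, Rmin, Rabs; simpl.
  split; repeat destruct Rle_dec; repeat destruct Rcase_abs; lra.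
Qed.

Lemma Dparam_continuous (c : R) : continuous Dparam c.
Proof.
  apply filterlim_locally. intros eps. exists eps. intros c' Hc'.
  destruct (Dparam_lipschitz c c') as [H1 H2].
  split; eapply Rle_lt_trans; [exact H1 | exact Hc' | exact H2 | exact Hc'].
Qed.

Lemma fst_Dparam_nonneg (c : R) : 0 <= fst (Dparam c).
Proof. apply Rmax_l. Qed.

Lemma fst_Dparam_le (c1 c2 : R) : c1 <= c2 -> fst (Dparam c1) <= fst (Dparam c2).
Proof. intros H. unfold Dparam, Rmax; simpl. repeat destruct Rle_dec; lra. Qed.

Lemma inD_Dparam (c : R) : 0 < c -> inD (Dparam c).
Proof.
  intros Hc. unfold inD. destruct (Rle_dec c 2).
  - rewrite Dparam_low by lra. right; simpl; lra.
  - rewrite Dparam_high by lra. left; simpl; lra.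
Qed.

Lemma inD_Dparam_surj (z : R * R) : inD z -> exists c, 0 < c /\ Dparam c = z.
Proof.
  destruct z as [a b]. unfold inD; simpl. intros [[Ha ->]|[-> Hb]].
  - exists (a + 2). split; [lra|]. rewrite Dparam_high by lra. f_equal; ring.
  - exists b. split; [lra|]. apply Dparam_low; lra.
Qed.

(** * Shooting from D *)

Section Shooting.

Variables Fq Fp : R -> R -> R -> R.
Hypothesis HF : is_flow Fq Fp.

Definition shot_q (c s : R) : R := Fq s (fst (Dparam c)) (snd (Dparam c)).
Definition shot_p (c s : R) : R := Fp s (fst (Dparam c)) (snd (Dparam c)).
Definition shot_positive (T c : R) : Prop := forall s, 0 < s < T -> 0 < shot_q c s.

Lemma shot_newton (c : R) : newton_sol dg (shot_q c) (shot_p c).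
Proof.
  intros t. destruct (HF (fst (Dparam c)) (snd (Dparam c))) as [_ [_ H]].
  destruct (H t) as [Hq Hp]. rewrite Derive_g in Hp. now split.
Qed.

Lemma shot_q_0 (c : R) : shot_q c 0 = fst (Dparam c).
Proof. apply HF. Qed.

Lemma shot_p_0 (c : R) : shot_p c 0 = snd (Dparam c).
Proof. apply HF. Qed.

Lemma shot_energy (c s : R) :
  shot_p c s ^ 2 + 2 * g (shot_q c s) = snd (Dparam c) ^ 2 + 2 * g (fst (Dparam c)).
Proof. rewrite <- shot_q_0, <- shot_p_0. apply (newton_energy g dg is_derive_g), shot_newton. Qed.

Lemma shot_q_continuity_pt (c s : R) : continuity_pt (shot_q c) s.
Proof. apply (is_derive_continuity_pt _ _ _ (proj1 (shot_newton c s))). Qed.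

Lemma shot_p_continuity_pt (c s : R) : continuity_pt (shot_p c) s.
Proof. apply (is_derive_continuity_pt _ _ _ (proj2 (shot_newton c s))). Qed.

Lemma shot_state_inj (c1 c2 s : R) : 0 <= s ->
  shot_q c1 s = shot_q c2 s -> shot_p c1 s = shot_p c2 s -> c1 = c2.
Proof.
  intros Hs Eq Ep.
  destruct (newton_unique_bwd dg 48 dg_lipschitz _ _ _ _ s (shot_newton c1) (shot_newton c2))
    as [E0q E0p]; auto.
  rewrite !shot_q_0 in E0q. rewrite !shot_p_0 in E0p.
  apply Dparam_inj. now rewrite (surjective_pairing (Dparam c1)), E0q, E0p, <- surjective_pairing.
Qed.

Lemma shot_zero (s : R) : 0 <= s -> shot_q 0 s = 0 /\ shot_p 0 s = 0.
Proof.
  intros Hs.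
  assert (Hz : newton_sol dg (fun _ => 0) (fun _ => 0)).
  { intros t. rewrite dg_0, Ropp_0. split; exact (is_derive_const 0 t). }
  apply (newton_unique_fwd dg 48 dg_lipschitz _ _ _ _ (shot_newton 0) Hz); auto.
  - rewrite shot_q_0, Dparam_low by lra. reflexivity.
  - rewrite shot_p_0, Dparam_low by lra. reflexivity.
Qed.

Lemma shot_q_lipschitz (T c c' s : R) : 0 <= s <= T ->
  Rabs (shot_q c' s - shot_q c s) <= 2 * exp (49 * T) * Rabs (c' - c).
Proof.
  intros Hs.
  pose proof (newton_gronwall dg 48 dg_lipschitz _ _ _ _ (shot_newton c') (shot_newton c) s
                (proj1 Hs)) as G.
  unfold sqdist in G. rewrite !shot_q_0, !shot_p_0 in G.
  replace (1 + 48) with 49 in G by ring.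
  assert (H0 : (fst (Dparam c') - fst (Dparam c)) ^ 2 + (snd (Dparam c') - snd (Dparam c)) ^ 2
               <= 2 * Rabs (c' - c) ^ 2).
  { destruct (Dparam_lipschitz c c') as [A B]. rewrite <- !(pow2_abs (_ - _)).
    assert (Rabs (fst (Dparam c') - fst (Dparam c)) ^ 2 <= Rabs (c' - c) ^ 2)
      by (apply pow_incr; split; [apply Rabs_pos|exact A]).
    assert (Rabs (snd (Dparam c') - snd (Dparam c)) ^ 2 <= Rabs (c' - c) ^ 2)
      by (apply pow_incr; split; [apply Rabs_pos|exact B]).
    lra. }
  assert (He : exp (49 * s) <= exp (49 * T))
    by (destruct (Req_dec s T) as [->|]; [lra|apply Rlt_le, exp_increasing; lra]).
  pose proof (exp_pos (49 * s)). pose proof (exp_pos (49 * T)).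
  set (K := 2 * exp (49 * T)) in *. set (u := Rabs (c' - c)) in *.
  assert (0 <= u) by apply Rabs_pos.
  assert (Hq : (shot_q c' s - shot_q c s) ^ 2 <= (K * u) ^ 2).
  { pose proof (pow2_ge_0 (shot_p c' s - shot_p c s)).
    assert (2 * u ^ 2 * exp (49 * s) <= K * u ^ 2) by (unfold K; nra).
    assert (HK : 1 <= K) by (unfold K; pose proof (exp_ineq1_le (49 * T)); lra).
    assert (K * u ^ 2 <= (K * u) ^ 2).
    { replace ((K * u) ^ 2) with (K * (K * u ^ 2)) by ring.
      rewrite <- (Rmult_1_l (K * u ^ 2)) at 1. apply Rmult_le_compat_r; nra. }
    nra. }
  rewrite <- (Rabs_pos_eq (K * u)) by (unfold K; nra).
  apply Rsqr_le_abs_0. unfold Rsqr. simpl in Hq. lra.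
Qed.

Lemma shot_q_uniform (T c eps : R) : 0 < eps ->
  exists delta, 0 < delta /\ forall c' s, c - delta <= c' <= c + delta -> 0 <= s <= T ->
    shot_q c s - eps <= shot_q c' s <= shot_q c s + eps.
Proof.
  intros He. set (K := 2 * exp (49 * T)).
  assert (HK : 0 < K) by (unfold K; pose proof (exp_pos (49 * T)); lra).
  exists (eps / K). split; [now apply Rdiv_lt_0_compat|]. intros c' s Hc' Hs.
  apply Rabs_le_between', Rle_trans with (1 := shot_q_lipschitz T c c' s Hs). fold K.
  replace eps with (K * (eps / K)) by (field; lra).
  apply Rmult_le_compat_l; [lra|]. apply Rabs_le_between'. lra.
Qed.

Lemma shot_q_continuity_pt_c (t c : R) : 0 <= t -> continuity_pt (fun c => shot_q c t) c.
Proof.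
  intros Ht. apply continuity_pt_locally. intros eps. pose proof (cond_pos eps).
  destruct (shot_q_uniform t c (eps / 2)) as [delta [Hd Hclose]]; [lra|].
  exists (mkposreal delta Hd). intros c' Hc'. change (Rabs (c' - c) < delta) in Hc'.
  apply Rabs_lt_between' in Hc'. specialize (Hclose c' t ltac:(lra) ltac:(lra)).
  apply Rabs_lt_between'. lra.
Qed.

Lemma shot_p_high (c s : R) : 2 <= c -> 0 < shot_p c s <= 3.
Proof.
  intros Hc.
  assert (Hsq : forall s, 2 <= shot_p c s ^ 2 <= 6).
  { intros r. pose proof (shot_energy c r) as E. rewrite Dparam_high in E by lra. simpl in E.
    pose proof (g_bounds (shot_q c r)). pose proof (g_bounds (c - 2)). lra. }
  assert (Hpos : 0 < shot_p c s).
  { destruct (Rlt_or_le 0 (shot_p c s)) as [|Hle]; auto. exfalso.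
    destruct (IVT_gen (shot_p c) 0 s 0 (shot_p_continuity_pt c)) as [r [_ Hr]].
    { rewrite shot_p_0, Dparam_high by lra. unfold Rmin, Rmax. simpl. destruct Rle_dec; lra. }
    specialize (Hsq r). rewrite Hr in Hsq. simpl in Hsq. lra. }
  specialize (Hsq s). split; [exact Hpos|nra].
Qed.

Lemma shot_q_high (c s : R) : 2 <= c -> 0 <= s ->
  c - 2 <= shot_q c s <= c - 2 + 3 * s /\ (0 < s -> c - 2 < shot_q c s).
Proof.
  intros Hc Hs.
  destruct (MVT_closed (shot_q c) (shot_p c) 0 s Hs (fun r => proj1 (shot_newton c r)))
    as [r [_ E]].
  rewrite shot_q_0, Dparam_high in E by lra. simpl in E.
  pose proof (shot_p_high c r Hc). split; [split|intros]; nra.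
Qed.

Lemma shot_positive_high (T c : R) : 2 <= c -> shot_positive T c.
Proof.
  intros Hc s Hs. destruct (shot_q_high c s Hc ltac:(lra)) as [_ H].
  specialize (H (proj1 Hs)). lra.
Qed.

(* The force is bounded by 8, so [p] stays positive up to time [c / 8]. *)
Lemma shot_q_pos_early (c s : R) : 0 < c <= 2 -> 0 < s < c / 8 -> 0 < shot_q c s.
Proof.
  intros Hc Hs.
  assert (Hp : forall r, 0 <= r <= s -> 0 < shot_p c r).
  { intros r Hr.
    destruct (MVT_closed (shot_p c) (fun u => - dg (shot_q c u)) 0 r (proj1 Hr)
                (fun u => proj2 (shot_newton c u))) as [u [_ E]].
    rewrite shot_p_0, Dparam_low in E by lra. simpl in E.
    pose proof (dg_abs_le (shot_q c u)) as B. apply Rabs_le_between in B. nra. }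
  destruct (MVT_closed (shot_q c) (shot_p c) 0 s ltac:(lra) (fun r => proj1 (shot_newton c r)))
    as [u [Hu E]].
  rewrite shot_q_0, Dparam_low in E by lra. simpl in E.
  specialize (Hp u Hu). nra.
Qed.

Definition shot_gap (c1 c2 s : R) : R := shot_q c2 s - shot_q c1 s.

Lemma is_derive_shot_gap (c1 c2 s : R) :
  is_derive (shot_gap c1 c2) s (shot_p c2 s - shot_p c1 s).
Proof.
  apply (is_derive_minus (shot_q c2) (shot_q c1));
    [apply (shot_newton c2 s)|apply (shot_newton c1 s)].
Qed.

Lemma shot_gap_init (c1 c2 : R) : 0 < c1 < c2 ->
  exists e, 0 < e /\ forall s, 0 < s < e -> 0 < shot_gap c1 c2 s.
Proof.
  intros Hc. set (gap := shot_gap c1 c2). pose proof (is_derive_shot_gap c1 c2) as Hgap.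
  destruct (Rle_dec c2 2) as [Hlow|Hhigh].
  - (* both shots start at [q = 0], the faster one moves ahead *)
    destruct (is_derive_pos_locally gap 0 _ (Hgap 0)) as [e [He [Hr _]]].
    { rewrite !shot_p_0, !Dparam_low by lra. simpl. lra. }
    exists e. split; [exact He|]. intros s Hs. specialize (Hr s ltac:(lra)).
    unfold gap, shot_gap in *. rewrite !shot_q_0, !Dparam_low in Hr by lra. simpl in Hr. lra.
  - assert (Hg0 : 0 < gap 0).
    { unfold gap, shot_gap. rewrite !shot_q_0, (Dparam_high c2) by lra. unfold Dparam, Rmax; simpl.
      destruct Rle_dec; lra. }
    destruct (continuity_pt_eps gap 0 (gap 0) (is_derive_continuity_pt _ _ _ (Hgap 0)) Hg0)
      as [e [He Hnear]].
    exists e. split; [exact He|]. intros s Hs.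
    specialize (Hnear s ltac:(rewrite Rminus_0_r, Rabs_right; lra)).
    apply Rabs_lt_between in Hnear. lra.
Qed.

(* The Wronskian has derivative [q1 q2 (dg_quot q1 - dg_quot q2)],
   nonnegative while [0 <= q1 <= q2]. *)
Lemma shot_wronskian_nonneg (c1 c2 s0 : R) : c1 <= 2 -> c2 <= 2 -> 0 <= s0 ->
  (forall s, 0 <= s <= s0 -> 0 <= shot_q c1 s <= shot_q c2 s) ->
  0 <= shot_q c1 s0 * shot_p c2 s0 - shot_q c2 s0 * shot_p c1 s0.
Proof.
  intros Hc1 Hc2 Hs0 Hord.
  set (W := fun s => shot_q c1 s * shot_p c2 s - shot_q c2 s * shot_p c1 s).
  set (dW := fun s => shot_q c1 s * shot_q c2 s * (dg_quot (shot_q c1 s) - dg_quot (shot_q c2 s))).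
  assert (HW : forall s, is_derive W s (dW s)).
  { intros s. destruct (shot_newton c1 s) as [Hq1 Hp1]. destruct (shot_newton c2 s) as [Hq2 Hp2].
    eapply (eq_ind _ (is_derive _ s)).
    - apply (is_derive_minus (fun s => shot_q c1 s * shot_p c2 s)
                             (fun s => shot_q c2 s * shot_p c1 s)).
      + apply (is_derive_mult _ _ s _ _ Hq1 Hp2). intros; apply Rmult_comm.
      + apply (is_derive_mult _ _ s _ _ Hq2 Hp1). intros; apply Rmult_comm.
    - unfold dW, dg. ring_R. }
  destruct (MVT_closed W dW 0 s0 Hs0 HW) as [xi [Hxi E]].
  assert (HW0 : W 0 = 0) by (unfold W; rewrite !shot_q_0, !Dparam_low by lra; simpl; ring).
  assert (HdW : 0 <= dW xi).
  { destruct (Hord xi Hxi) as [Ha Hb]. unfold dW.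
    pose proof (dg_quot_le_nonneg _ _ (conj Ha Hb)).
    apply Rmult_le_pos; [apply Rmult_le_pos|]; lra. }
  fold (W s0). nra.
Qed.

Lemma shot_p_le_at_contact (c1 c2 s0 : R) : 0 < c1 < c2 -> 0 <= s0 ->
  0 < shot_q c1 s0 -> shot_q c1 s0 = shot_q c2 s0 ->
  (forall s, 0 <= s <= s0 -> 0 <= shot_q c1 s <= shot_q c2 s) ->
  shot_p c1 s0 <= shot_p c2 s0.
Proof.
  intros Hc Hs0 Hq Heq Hord. destruct (Rle_dec c2 2) as [Hlow|Hhigh].
  - pose proof (shot_wronskian_nonneg c1 c2 s0 ltac:(lra) Hlow Hs0 Hord) as W.
    rewrite <- Heq in W. nra.
  - (* the second shot has more energy and positive momentum *)
    pose proof (shot_energy c1 s0) as E1. pose proof (shot_energy c2 s0) as E2.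
    rewrite <- Heq, Dparam_high in E2 by lra. simpl in E2.
    assert (HE : snd (Dparam c1) ^ 2 + 2 * g (fst (Dparam c1)) <= 2 ^ 2 + 2 * g (c2 - 2)).
    { destruct (Rle_dec c1 2).
      - rewrite Dparam_low by lra. simpl. rewrite g_0. pose proof (g_bounds (c2 - 2)). nra.
      - rewrite Dparam_high by lra. simpl. pose proof (g_le_nonneg (c1 - 2) (c2 - 2)). lra. }
    pose proof (shot_p_high c2 s0 ltac:(lra)). nra.
Qed.

Lemma shot_q_lt (T c1 c2 : R) : 0 < c1 < c2 -> shot_positive T c1 ->
  forall s, 0 < s < T -> shot_q c1 s < shot_q c2 s.
Proof.
  intros Hc Hpos s1 Hs1.
  destruct (Rlt_or_le 0 (shot_gap c1 c2 s1)) as [H|Hle]; [unfold shot_gap in H; lra|exfalso].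
  pose proof (is_derive_shot_gap c1 c2) as Hgap.
  destruct (shot_gap_init c1 c2 Hc) as [e [He Hinit]].
  destruct (first_zero (shot_gap c1 c2) e s1
              (fun s => is_derive_continuity_pt _ _ _ (Hgap s)) He Hinit ltac:(lra) Hle)
    as [s0 [Hs0 [Hz Hbefore]]].
  assert (Hslope : shot_p c2 s0 - shot_p c1 s0 <= 0).
  { destruct (Rle_lt_dec (shot_p c2 s0 - shot_p c1 s0) 0) as [|Hgt]; auto. exfalso.
    destruct (is_derive_pos_locally _ _ _ (Hgap s0) Hgt) as [d [Hd [_ Hlt]]].
    set (y := Rmax (s0 - d / 2) (s0 / 2)).
    assert (Hy : 0 < y < s0 /\ s0 - d < y) by (unfold y, Rmax; destruct Rle_dec; lra).
    specialize (Hlt y ltac:(lra)). specialize (Hbefore y (proj1 Hy)). lra. }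
  unfold shot_gap in Hz, Hbefore.
  assert (Hq : 0 < shot_q c1 s0) by (apply Hpos; lra).
  assert (Hord : forall s, 0 <= s <= s0 -> 0 <= shot_q c1 s <= shot_q c2 s).
  { intros s Hs. destruct (Req_dec s 0) as [->|H0]; [|destruct (Req_dec s s0) as [->|H1]].
    - rewrite !shot_q_0. split; [apply fst_Dparam_nonneg|apply fst_Dparam_le; lra].
    - lra.
    - specialize (Hbefore s ltac:(lra)). specialize (Hpos s ltac:(lra)). lra. }
  pose proof (shot_p_le_at_contact c1 c2 s0 Hc ltac:(lra) Hq ltac:(lra) Hord).
  assert (c1 = c2) by (apply (shot_state_inj c1 c2 s0); lra). lra.
Qed.

Lemma shot_positive_extend (t c : R) : shot_positive t c -> 0 < shot_q c t ->
  exists eta, 0 < eta /\ shot_positive (t + eta) c.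
Proof.
  intros Hpos Hq.
  destruct (continuity_pt_eps _ _ _ (shot_q_continuity_pt c t) Hq) as [d [Hd Hnear]].
  exists d. split; [exact Hd|]. intros s Hs.
  destruct (Rlt_or_le s t); [apply Hpos; lra|].
  specialize (Hnear s ltac:(rewrite Rabs_right; lra)). apply Rabs_lt_between in Hnear. lra.
Qed.

Lemma shot_q_lt_at (t c1 c2 : R) : 0 < t -> 0 < c1 < c2 -> shot_positive t c1 ->
  0 < shot_q c1 t -> shot_q c1 t < shot_q c2 t.
Proof.
  intros Ht Hc Hpos Hq. destruct (shot_positive_extend t c1 Hpos Hq) as [eta [He Hpos']].
  apply (shot_q_lt (t + eta)); auto. lra.
Qed.

Lemma shot_positive_mono (T c1 c2 : R) : 0 < c1 <= c2 -> shot_positive T c1 ->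
  shot_positive T c2.
Proof.
  intros Hc Hpos s Hs. destruct (Req_dec c1 c2) as [<-|]; [now apply Hpos|].
  pose proof (shot_q_lt T c1 c2 ltac:(lra) Hpos s Hs). specialize (Hpos s Hs). lra.
Qed.

Lemma shot_positive_threshold (t m : R) : 0 < t -> 0 < m ->
  (forall c, m < c -> shot_positive t c) -> shot_positive t m.
Proof.
  intros Ht Hm Hup.
  assert (Hnn : forall s, 0 < s < t -> 0 <= shot_q m s).
  { intros s Hs. destruct (Rle_lt_dec 0 (shot_q m s)) as [|Hneg]; auto. exfalso.
    destruct (shot_q_uniform t m (- shot_q m s / 2)) as [delta [Hd Hclose]]; [lra|].
    specialize (Hclose (m + delta) s ltac:(lra) ltac:(lra)).
    specialize (Hup (m + delta) ltac:(lra) s Hs). lra. }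
  intros s0 Hs0. destruct (Rlt_or_le 0 (shot_q m s0)) as [|Hle]; auto. exfalso.
  assert (Hz : shot_q m s0 = 0) by (specialize (Hnn s0 Hs0); lra).
  (* [s0] is an interior minimum, so the trajectory passes through the rest state *)
  assert (Hp : shot_p m s0 = 0).
  { pose proof (Rmin_l s0 (t - s0)). pose proof (Rmin_r s0 (t - s0)).
    apply (is_derive_local_min (shot_q m) s0 _ (Rmin s0 (t - s0)) (proj1 (shot_newton m s0))).
    - apply Rmin_pos; lra.
    - intros y Hy. apply Rabs_lt_between' in Hy. rewrite Hz. apply Hnn. lra. }
  destruct (shot_zero s0 ltac:(lra)) as [Zq Zp].
  assert (m = 0) by (apply (shot_state_inj m 0 s0); lra). lra.
Qed.

Lemma shot_positive_below (t m : R) : 0 < t -> 0 < m <= 2 -> shot_positive t m ->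
  0 < shot_q m t -> exists c, 0 < c < m /\ shot_positive t c.
Proof.
  intros Ht Hm Hpos Hqt.
  destruct (Rle_dec t (m / 16)) as [Hshort|Hlong].
  - exists (m / 2). split; [lra|]. intros s Hs. apply shot_q_pos_early; lra.
  - destruct (continuity_ab_min (shot_q m) (m / 16) t ltac:(lra)
                (fun s _ => shot_q_continuity_pt m s)) as [smin [Hmin Hsmin]].
    set (mu := shot_q m smin).
    assert (Hmu : 0 < mu) by (unfold mu; destruct (Req_dec smin t) as [->|]; [lra|apply Hpos; lra]).
    destruct (shot_q_uniform t m (mu / 2)) as [delta [Hd Hclose]]; [lra|].
    pose proof (Rmin_l delta (m / 2)). pose proof (Rmin_r delta (m / 2)).
    assert (0 < Rmin delta (m / 2)) by (apply Rmin_pos; lra).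
    exists (m - Rmin delta (m / 2)). split; [lra|].
    intros s Hs. destruct (Rlt_or_le s (m / 16)); [apply shot_q_pos_early; lra|].
    specialize (Hclose (m - Rmin delta (m / 2)) s ltac:(lra) ltac:(lra)).
    specialize (Hmin s ltac:(lra)). fold mu in Hmin. lra.
Qed.

Lemma shot_q_below_exists (t x : R) : 0 < t -> 0 < x ->
  exists c, 0 < c /\ shot_positive t c /\ shot_q c t < x.
Proof.
  intros Ht Hx.
  set (E := fun c => 0 <= c <= 2 /\ ~ shot_positive t c).
  assert (E0 : E 0).
  { split; [lra|]. intros H0. specialize (H0 (t / 2) ltac:(lra)).
    rewrite (proj1 (shot_zero (t / 2) ltac:(lra))) in H0. lra. }
  destruct (completeness E) as [m [Hub Hlub]].
  { exists 2. intros c [Hc _]. lra. }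
  { now exists 0. }
  assert (Hm : 0 <= m <= 2) by (split; [apply Hub, E0|apply Hlub; intros c [Hc _]; lra]).
  assert (Hup : forall c, m < c -> shot_positive t c).
  { intros c Hc. destruct (Rle_dec c 2); [|apply shot_positive_high; lra].
    apply NNPP. intros Hn. assert (Ec : E c) by (split; [lra|exact Hn]).
    specialize (Hub c Ec). lra. }
  destruct (Req_dec m 0) as [Hm0|Hm0].
  - (* shots with small [c] stay close to the rest state *)
    destruct (shot_q_uniform t 0 (x / 2)) as [delta [Hd Hclose]]; [lra|].
    exists delta. split; [lra|]. split; [apply Hup; lra|].
    specialize (Hclose delta t ltac:(lra) ltac:(lra)).
    rewrite (proj1 (shot_zero t ltac:(lra))) in Hclose. lra.
  - assert (Hpm : shot_positive t m) by (apply shot_positive_threshold; auto; lra).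
    exists m. split; [lra|]. split; [exact Hpm|].
    destruct (Rle_lt_dec (shot_q m t) 0); [lra|exfalso].
    destruct (shot_positive_below t m Ht ltac:(lra) Hpm ltac:(lra)) as [c [Hc Hpc]].
    assert (m <= c); [|lra].
    apply Hlub. intros c' [Hc' Hn]. destruct (Rle_dec c' c) as [|Hgt]; auto. exfalso.
    apply Hn, (shot_positive_mono t c c'); auto; lra.
Qed.

Lemma shot_param_exists (t x : R) : 0 < t -> 0 < x ->
  exists c, 0 < c /\ shot_positive t c /\ shot_q c t = x.
Proof.
  intros Ht Hx.
  destruct (shot_q_below_exists t x Ht Hx) as [clo [Hclo [Hplo Hqlo]]].
  destruct (shot_q_high (x + 3) t ltac:(lra) ltac:(lra)) as [[Hhi _] _].
  assert (Hclo3 : clo < x + 3).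
  { destruct (Rlt_or_le clo (x + 3)) as [|Hge]; auto.
    destruct (shot_q_high clo t ltac:(lra) ltac:(lra)) as [[H _] _]. lra. }
  destruct (IVT_gen (fun c => shot_q c t) clo (x + 3) x
              (fun c => shot_q_continuity_pt_c t c ltac:(lra))) as [c [Hc Hcx]].
  { rewrite Rmin_left, Rmax_right by lra. lra. }
  rewrite Rmin_left, Rmax_right in Hc by lra.
  assert (c <> clo) by (intros ->; lra).
  exists c. split; [lra|]. split; [apply (shot_positive_mono t clo c); auto; lra|exact Hcx].
Qed.

Definition shot_param (t x : R) : R :=
  epsilon (inhabits 0) (fun c => 0 < c /\ shot_positive t c /\ shot_q c t = x).

Lemma shot_param_spec (t x : R) : 0 < t -> 0 < x ->
  0 < shot_param t x /\ shot_positive t (shot_param t x) /\ shot_q (shot_param t x) t = x.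
Proof. intros Ht Hx. unfold shot_param. apply epsilon_spec, shot_param_exists; auto. Qed.

Lemma shot_param_unique (t x c : R) : 0 < t -> 0 < x ->
  0 < c -> shot_positive t c -> shot_q c t = x -> c = shot_param t x.
Proof.
  intros Ht Hx Hc Hpos Hq. destruct (shot_param_spec t x Ht Hx) as [Hc' [Hpos' Hq']].
  destruct (Rtotal_order c (shot_param t x)) as [Hlt|[|Hgt]]; auto; exfalso.
  - pose proof (shot_q_lt_at t c _ Ht (conj Hc Hlt) Hpos ltac:(lra)). lra.
  - pose proof (shot_q_lt_at t _ c Ht (conj Hc' Hgt) Hpos' ltac:(lra)). lra.
Qed.

Lemma shot_param_lt (t x c : R) : 0 < t -> 0 < x ->
  0 < c -> shot_positive t c -> x < shot_q c t -> shot_param t x < c.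
Proof.
  intros Ht Hx Hc Hpos Hq. destruct (shot_param_spec t x Ht Hx) as [Hc' [_ Hq']].
  destruct (Rlt_or_le (shot_param t x) c) as [|Hle]; auto. exfalso.
  destruct (Req_dec c (shot_param t x)) as [E|Hne]; [rewrite E in Hq; lra|].
  pose proof (shot_q_lt_at t c (shot_param t x) Ht ltac:(lra) Hpos ltac:(lra)). lra.
Qed.

Lemma shot_param_le_inv (t x c : R) : 0 < t -> 0 < x ->
  shot_param t x <= c -> shot_positive t c /\ x <= shot_q c t.
Proof.
  intros Ht Hx Hle. destruct (shot_param_spec t x Ht Hx) as [Hc' [Hpos' Hq']].
  split; [apply (shot_positive_mono t (shot_param t x)); auto; lra|].
  destruct (Req_dec (shot_param t x) c) as [<-|Hne]; [lra|].
  pose proof (shot_q_lt_at t (shot_param t x) c Ht ltac:(lra) Hpos' ltac:(lra)). lra.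
Qed.

Lemma shot_param_increasing (t x x' : R) : 0 < t -> 0 < x < x' ->
  shot_param t x < shot_param t x'.
Proof.
  intros Ht Hx. destruct (shot_param_spec t x Ht ltac:(lra)) as [_ [_ Hq]].
  destruct (Rlt_or_le (shot_param t x) (shot_param t x')) as [|Hle]; auto. exfalso.
  destruct (shot_param_le_inv t x' _ Ht ltac:(lra) Hle). lra.
Qed.

Lemma shot_param_upper (t x e : R) : 0 < t -> 0 < x -> 0 < e ->
  exists d, 0 < d /\ forall t' x', Rabs (t' - t) < d -> Rabs (x' - x) < d ->
    shot_param t' x' < shot_param t x + e.
Proof.
  intros Ht Hx He. destruct (shot_param_spec t x Ht Hx) as [Hc [Hpos Hq]].
  set (c := shot_param t x) in *.
  assert (Hpos2 : shot_positive t (c + e)) by (apply (shot_positive_mono t c); auto; lra).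
  assert (Hgap : x < shot_q (c + e) t) by (rewrite <- Hq; apply shot_q_lt_at; auto; lra).
  destruct (shot_positive_extend t (c + e) Hpos2 ltac:(lra)) as [eta [Heta Hpos2']].
  set (gap := shot_q (c + e) t - x).
  destruct (continuity_pt_eps _ t (gap / 2) (shot_q_continuity_pt (c + e) t))
    as [d1 [Hd1 Hnear]]; [unfold gap; lra|].
  pose proof (Rmin_l (Rmin d1 eta) (Rmin t (Rmin x (gap / 2)))).
  pose proof (Rmin_r (Rmin d1 eta) (Rmin t (Rmin x (gap / 2)))).
  pose proof (Rmin_l d1 eta). pose proof (Rmin_r d1 eta).
  pose proof (Rmin_l t (Rmin x (gap / 2))). pose proof (Rmin_r t (Rmin x (gap / 2))).
  pose proof (Rmin_l x (gap / 2)). pose proof (Rmin_r x (gap / 2)).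
  exists (Rmin (Rmin d1 eta) (Rmin t (Rmin x (gap / 2)))).
  split; [repeat apply Rmin_pos; unfold gap; lra|]. intros t' x' Ht' Hx'.
  specialize (Hnear t' ltac:(lra)).
  apply Rabs_lt_between' in Ht'. apply Rabs_lt_between' in Hx'. apply Rabs_lt_between' in Hnear.
  unfold gap in *. apply shot_param_lt; try lra.
  intros s Hs. apply Hpos2'. lra.
Qed.

Lemma shot_misses_locally (t x c : R) : 0 < t -> 0 < x -> 0 < c < shot_param t x ->
  exists d, 0 < d /\ forall t' x', Rabs (t' - t) < d -> Rabs (x' - x) < d ->
    ~ (shot_positive t' c /\ x' <= shot_q c t').
Proof.
  intros Ht Hx Hc. destruct (shot_param_spec t x Ht Hx) as [_ [_ Hq]].
  destruct (classic (shot_positive t c)) as [Hpos|Hnpos].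
  - assert (Hlt : shot_q c t < x).
    { destruct (Rle_lt_dec (shot_q c t) 0); [lra|]. rewrite <- Hq. now apply shot_q_lt_at. }
    set (gap := x - shot_q c t).
    destruct (continuity_pt_eps _ t (gap / 2) (shot_q_continuity_pt c t))
      as [d1 [Hd1 Hnear]]; [unfold gap; lra|].
    pose proof (Rmin_l d1 (gap / 2)). pose proof (Rmin_r d1 (gap / 2)).
    exists (Rmin d1 (gap / 2)). split; [apply Rmin_pos; unfold gap; lra|].
    intros t' x' Ht' Hx' [_ Hle]. specialize (Hnear t' ltac:(lra)).
    apply Rabs_lt_between' in Hx'. apply Rabs_lt_between' in Hnear. unfold gap in *. lra.
  - apply not_all_ex_not in Hnpos. destruct Hnpos as [s1 Hs1].
    apply imply_to_and in Hs1. destruct Hs1 as [Hs1 Hq1].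
    exists (t - s1). split; [lra|].
    intros t' x' Ht' Hx' [Hpos _]. apply Rabs_lt_between' in Ht'.
    apply Hq1, Hpos. lra.
Qed.

Lemma shot_param_lower (t x e : R) : 0 < t -> 0 < x -> 0 < e ->
  exists d, 0 < d /\ forall t' x', Rabs (t' - t) < d -> Rabs (x' - x) < d ->
    shot_param t x - e < shot_param t' x'.
Proof.
  intros Ht Hx He. pose proof (Rmin_l t x). pose proof (Rmin_r t x).
  destruct (Rle_lt_dec (shot_param t x - e) 0) as [Hc1|Hc1].
  - exists (Rmin t x). split; [apply Rmin_pos; lra|]. intros t' x' Ht' Hx'.
    apply Rabs_lt_between' in Ht'. apply Rabs_lt_between' in Hx'.
    destruct (shot_param_spec t' x') as [Hc' _]; lra.
  - destruct (shot_misses_locally t x (shot_param t x - e) Ht Hx ltac:(lra)) as [d [Hd Hmiss]].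
    pose proof (Rmin_l d (Rmin t x)). pose proof (Rmin_r d (Rmin t x)).
    exists (Rmin d (Rmin t x)). split; [repeat apply Rmin_pos; lra|]. intros t' x' Ht' Hx'.
    destruct (Rlt_or_le (shot_param t x - e) (shot_param t' x')) as [|Hle]; auto. exfalso.
    apply (Hmiss t' x'); [lra|lra|].
    apply Rabs_lt_between' in Ht'. apply Rabs_lt_between' in Hx'.
    apply shot_param_le_inv; lra.
Qed.

Lemma shot_param_continuous (t x : R) : 0 < t -> 0 < x ->
  continuous (fun z : R * R => shot_param (fst z) (snd z)) (t, x).
Proof.
  intros Ht Hx. apply filterlim_locally. intros eps.
  destruct (shot_param_upper t x eps Ht Hx (cond_pos eps)) as [d1 [Hd1 Hup]].
  destruct (shot_param_lower t x eps Ht Hx (cond_pos eps)) as [d2 [Hd2 Hlow]].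
  pose proof (Rmin_l d1 d2). pose proof (Rmin_r d1 d2).
  exists (mkposreal _ (Rmin_pos _ _ Hd1 Hd2)). intros [t' x'] [Ht' Hx'].
  change (Rabs (t' - t) < Rmin d1 d2) in Ht'. change (Rabs (x' - x) < Rmin d1 d2) in Hx'.
  change (Rabs (shot_param t' x' - shot_param t x) < eps). apply Rabs_lt_between'.
  specialize (Hup t' x' ltac:(lra) ltac:(lra)). specialize (Hlow t' x' ltac:(lra) ltac:(lra)).
  lra.
Qed.

Lemma shot_param_small_time (t x : R) : 0 < x -> 0 < t < x / 3 ->
  Rabs (shot_param t x - (x + 2)) <= 3 * t.
Proof.
  intros Hx Ht. destruct (shot_param_spec t x ltac:(lra) Hx) as [_ [_ Hq]].
  assert (Hhigh : 2 <= shot_param t x).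
  { destruct (Rle_lt_dec 2 (shot_param t x)) as [|Hlt]; auto. exfalso.
    destruct (shot_param_le_inv t x 2 ltac:(lra) Hx ltac:(lra)) as [_ H].
    destruct (shot_q_high 2 t ltac:(lra) ltac:(lra)) as [[_ H'] _]. lra. }
  destruct (shot_q_high (shot_param t x) t Hhigh ltac:(lra)) as [Hb _]. rewrite Hq in Hb.
  apply Rabs_le_between'. lra.
Qed.

Lemma shot_param_lim (x : R) : 0 < x ->
  filterlim (fun t => shot_param t x) (at_right 0) (locally (x + 2)).
Proof.
  intros Hx. apply filterlim_locally. intros eps.
  pose proof (cond_pos eps).
  pose proof (Rmin_l (x / 3) (eps / 6)). pose proof (Rmin_r (x / 3) (eps / 6)).
  exists (mkposreal (Rmin (x / 3) (eps / 6)) ltac:(apply Rmin_pos; lra)). intros t Ht Htpos.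
  change (Rabs (t - 0) < Rmin (x / 3) (eps / 6)) in Ht.
  rewrite Rminus_0_r, Rabs_right in Ht by lra.
  change (Rabs (shot_param t x - (x + 2)) < eps).
  eapply Rle_lt_trans; [apply shot_param_small_time; lra|]. lra.
Qed.

End Shooting.

Theorem lemma5p16 (Fq Fp : R -> R -> R -> R) (HF : is_flow Fq Fp) :
  exists Delta : R -> R -> R * R,
    (forall t x, 0 < t -> 0 < x -> Delta_prop Fq Delta t x) /\
    (forall Delta' : R -> R -> R * R,
        (forall t x, 0 < t -> 0 < x -> Delta_prop Fq Delta' t x) ->
        forall t x, 0 < t -> 0 < x -> Delta' t x = Delta t x) /\
    (* (1) continuity on ]0,+oo[ x ]0,+oo[ *)
    (forall t x, 0 < t -> 0 < x ->
        continuous (fun z : R * R => Delta (fst z) (snd z)) (t, x)) /\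
    (* (2) *)
    (forall t0 x0 x0' p0 p0', 0 < t0 ->
        Delta t0 x0 = (0, p0) -> Delta t0 x0' = (0, p0') ->
        0 < x0 -> x0 < x0' -> x0' < qsharp Fq t0 -> p0 < p0') /\
    (* (3) *)
    (forall x, 0 < x ->
        filterlim (fun t => Delta t x) (at_right 0) (locally (x, 2))).
Proof.
  exists (fun t x => Dparam (shot_param Fq t x)).
  split; [|split; [|split; [|split]]].
  - intros t x Ht Hx. destruct (shot_param_spec Fq Fp HF t x Ht Hx) as [Hc [Hpos Hq]].
    split; [now apply inD_Dparam|]. split; [exact Hq|]. exact Hpos.
  - intros Delta' HD' t x Ht Hx. destruct (HD' t x Ht Hx) as [Hin [Hq Hpos]].
    destruct (inD_Dparam_surj _ Hin) as [c [Hc Hdc]]. rewrite <- Hdc in *. f_equal.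
    now apply (shot_param_unique Fq Fp HF).
  - intros t x Ht Hx. apply (continuous_comp (fun z => shot_param Fq (fst z) (snd z)) Dparam).
    + now apply (shot_param_continuous Fq Fp HF).
    + apply Dparam_continuous.
  -
    intros t0 x0 x0' p0 p0' Ht E0 E0' Hx0 Hlt _.
    apply Dparam_on_axis in E0. apply Dparam_on_axis in E0'. subst p0 p0'.
    apply (shot_param_increasing Fq Fp HF); lra.
  - intros x Hx. eapply filterlim_comp; [now apply (shot_param_lim Fq Fp HF)|].
    replace (x, 2) with (Dparam (x + 2)) by (rewrite Dparam_high by lra; f_equal; ring).
    apply Dparam_continuous.
Qed.
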